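(* Let $P(t)(x)=x^n+a_2(t)x^{n-2}-\dots+(-1)^na_n(t)$ be a $C^\infty$ curve of real polynomials (with $a_1=0$), defined for $t$ near $0$, all of whose roots are real for every $t$. Then for every integer $r\ge0$ the following are equivalent: (1) $m(a_k)\ge kr$ for all $2\le k\le n$; (2) $m(\tilde\Delta_k)\ge k(k-1)r$ for all $2\le k\le n$; (3) $m(a_2)\ge 2r$.
   Context: Convention: a monic polynomial is written $P(x)=x^n-a_1x^{n-1}+a_2x^{n-2}-\dots+(-1)^na_n$, so $a_i=\sigma_i(x_1,\dots,x_n)$ is the $i$-th elementary symmetric function of its roots. Multiplicity: for a continuous real or complex valued function $f$ defined near $0$, $m(f)\in\{0,1,2,\dots\}\cup\{\infty\}$ is the supremum of all integers $p\ge0$ such that $f(t)=t^pg(t)$ near $0$ for some continuous function $g$; for a function $F$ on the space of polynomials and a fixed curve $P$, $m(F)$ means $m(t\mapsto F(P(t)))$. Power sums $s_i(x)=\sum_{j=1}^nx_j^i$ ($s_0=n$); $B_k(x)$ is the $k\times k$ matrix with $(i,j)$-entry $s_{i+j-2}(x)$, and $\Delta_k(x)=\det B_k(x)=\sum_{i_1<\dots<i_k}\prod_{1\le l<m\le k}(x_{i_l}-x_{i_m})^2$. Since $\Delta_k$ is symmetric there is a unique polynomial $\tilde\Delta_k$ with $\Delta_k(x)=\tilde\Delta_k(\sigma_1(x),\dots,\sigma_n(x))$; for a polynomial $P$ with coefficients $a_1,\dots,a_n$ one writes $\tilde\Delta_k(P)=\tilde\Delta_k(a_1,\dots,a_n)$.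 *)

From Stdlib Require Import Reals ClassicalEpsilon.
From Coquelicot Require Import Coquelicot.
From HB Require Import structures.
From mathcomp Require Import all_boot all_order all_algebra.
From mathcomp Require Import Rstruct.
From mathcomp Require Import mpoly.

Unset Printing Implicit Defensive.
Import GRing.Theory.

Local Open Scope ring_scope.

Definition smooth_on (eps : R) (f : R -> R) : Prop :=
  forall (m : nat) (t : R), Rlt (Rabs t) eps -> ex_derive_n f m t.

(* "m(f) >= p" : p is one of the integers p' such that f(t) = t^p' g(t)
   near 0 for some continuous g (m(f) is the supremum of these, which is
   >= p iff p itself is admissible, the set being downward closed). *)
Definition mult_ge (f : R -> R) (p : nat) : Prop :=
  exists delta : R, Rlt 0 delta /\
  exists g : R -> R,
    (forall t, Rlt (Rabs t) delta -> continuous g t) /\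
    (forall t, Rlt (Rabs t) delta -> f t = Rmult (pow t p) (g t)).

Definition curve_poly (n : nat) (a : nat -> R -> R) (t : R) : {poly R} :=
  'X^n + \sum_(k < n) (((-1) ^+ k.+1) * a k.+1 t) *: 'X^(n - k.+1).

Definition hyperbolic (P : {poly R}) : Prop :=
  exists s : seq R, P = \prod_(x <- s) ('X - x%:P).

Definition coefs (n : nat) (a : nat -> R -> R) (t : R) : 'I_n -> R :=
  fun i => a (val i).+1 t.

(* Delta_k = det B_k, B_k(i,j) = s_{i+j} (0-based), s_i = sum_j x_j^i *)
Definition Delta (n k : nat) : mpoly.mpoly n R :=
  \det (\matrix_(i < k, j < k)
          \sum_(l < n) (mpoly.mpolyX R (mpoly.mX l)) ^+ (i + j)).

Definition sigmas (n : nat) : n.-tuple (mpoly.mpoly n R) :=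
  [tuple mpoly.mesym n R i.+1 | i < n].

(* tilde Delta_k : the (unique) polynomial with
   tilde Delta_k (sigma_1, ..., sigma_n) = Delta_k *)
Definition Dtilde (n k : nat) : mpoly.mpoly n R :=
  epsilon (inhabits 0)
    (fun q : mpoly.mpoly n R => mpoly.comp_mpoly (sigmas n) q = Delta n k).

Definition Dtilde_curve (n k : nat) (a : nat -> R -> R) (t : R) : R :=
  (Dtilde n k).@[coefs n a t].

(* (3) => (1): since a_1 = 0, the roots x of P(t) satisfy sum x_i^2 = -2 a_2 = O(t^(2r)),
   so every root is O(t^r) and a_k = sigma_k(x) = O(t^(kr)); for a smooth function such a
   bound already gives the factorisation t^(kr) g(t) with g continuous, because it forces
   the derivatives of order < kr to vanish at 0 (Taylor's formula).
   (1) => (2): Delta_k(c x) = c^(k(k-1)) Delta_k(x) makes tilde Delta_k weighted homogeneous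
   on coefficient vectors of hyperbolic polynomials, so a_k = t^(kr) b_k gives
   tilde Delta_k(P(t)) = t^(k(k-1)r) tilde Delta_k(b(t)).
   (2) => (3): with a_1 = 0 one has tilde Delta_2(P) = n sum x_i^2 - (sum x_i)^2 = -2n a_2. *)

From Stdlib Require Import Reals Lra Lia ClassicalEpsilon.
From Coquelicot Require Import Coquelicot.

Local Open Scope R_scope.

Lemma continuous_epsilon_delta (f : R -> R) (x : R) :
  continuous f x <->
  forall e, 0 < e -> exists d, 0 < d /\
    forall y, Rabs (y - x) < d -> Rabs (f y - f x) < e.
Proof.
split.
- intros Hc e He. apply continuity_pt_filterlim in Hc.
  destruct (Hc e He) as [d [Hd H]]. exists d; split; [exact Hd|].
  intros y Hy. destruct (Req_dec y x) as [->|Hne].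
  + rewrite Rminus_diag, Rabs_R0; exact He.
  + apply (H y). repeat split; auto.
- intros H. apply continuity_pt_filterlim. intros e He.
  destruct (H e He) as [d [Hd Hy]].
  exists d. split; [exact Hd|]. intros y [_ Hyd]. now apply Hy.
Qed.

Lemma continuous_at_bounded (g : R -> R) (x : R) : continuous g x ->
  exists d M, 0 < d /\ 0 <= M /\ forall y, Rabs (y - x) < d -> Rabs (g y) <= M.
Proof.
intros Hc. destruct (proj1 (continuous_epsilon_delta g x) Hc 1 Rlt_0_1) as [d [Hd H]].
exists d, (Rabs (g x) + 1). repeat split; [exact Hd| pose proof (Rabs_pos (g x)); lra|].
intros y Hy. specialize (H y Hy).
pose proof (Rabs_triang (g y - g x) (g x)). replace (g y - g x + g x) with (g y) in * by ring.
lra.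
Qed.

Lemma continuous_eq0_of_linear_bound (g : R -> R) (d C : R) : 0 < d ->
  continuous g 0 -> (forall t, 0 < t < d -> Rabs (g t) <= C * t) -> g 0 = 0.
Proof.
intros Hd Hc HB. destruct (Req_dec (g 0) 0) as [|Hg0]; [assumption|exfalso].
assert (HL : 0 < Rabs (g 0)) by (apply Rabs_pos_lt; exact Hg0).
destruct (proj1 (continuous_epsilon_delta g 0) Hc (Rabs (g 0) / 2)) as [d' [Hd' Hy]]; [lra|].
set (K := Rabs C + 1).
assert (HK : 0 < K) by (unfold K; pose proof (Rabs_pos C); lra).
set (t := Rmin (Rmin d d') (Rabs (g 0) / (2 * K)) / 2).
assert (Ht : 0 < t /\ t < d /\ t < d' /\ K * t < Rabs (g 0) / 2).
{ assert (Hm : 0 < Rmin (Rmin d d') (Rabs (g 0) / (2 * K))).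
  { repeat apply Rmin_pos; try lra. apply Rdiv_lt_0_compat; lra. }
  pose proof (Rmin_l (Rmin d d') (Rabs (g 0) / (2 * K))).
  pose proof (Rmin_r (Rmin d d') (Rabs (g 0) / (2 * K))).
  pose proof (Rmin_l d d'). pose proof (Rmin_r d d').
  assert (K * (Rabs (g 0) / (2 * K)) = Rabs (g 0) / 2) by (field; lra).
  unfold t; repeat split; try lra. nra. }
destruct Ht as [Ht0 [Htd [Htd' HtK]]].
assert (Hnear : Rabs (g t - g 0) < Rabs (g 0) / 2).
{ apply Hy. rewrite Rminus_0_r, Rabs_right; lra. }
pose proof (HB t (conj Ht0 Htd)).
pose proof (Rabs_triang_inv (g 0) (g t)). rewrite <- Rabs_Ropp in Hnear.
replace (- (g t - g 0)) with (g 0 - g t) in Hnear by ring.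
assert (C * t <= K * t).
{ apply Rmult_le_compat_r; unfold K; [lra|pose proof (Rle_abs C); lra]. }
lra.
Qed.

Lemma Taylor_Lagrange_flat (f : R -> R) (j : nat) (t : R) : 0 < t ->
  (forall s, 0 <= s <= t -> forall k, (k <= j)%nat -> ex_derive_n f k s) ->
  (forall i, (i < j)%nat -> Derive_n f i 0 = 0) ->
  exists z, 0 <= z <= t /\ f t = t ^ j / INR (Factorial.fact j) * Derive_n f j z.
Proof.
intros Ht Hd Hv. destruct j as [|j].
{ exists t. split; [lra|]. simpl. field. }
destruct (Taylor_Lagrange f j 0 t Ht Hd) as [z [Hz ->]].
exists z. split; [lra|].
rewrite sum_eq_R0, Rminus_0_r; [ring|].
intros m Hm. rewrite Hv by lia. unfold Rdiv; ring.
Qed.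

Section FlatFunction.

Variables (f : R -> R) (eps : R).
Hypothesis eps_pos : 0 < eps.
Hypothesis f_smooth : smooth_on eps f.

Lemma smooth_on_locally (s : R) (N : nat) : Rabs s < eps ->
  locally s (fun y => forall k, (k <= N)%nat -> ex_derive_n f k y).
Proof.
intros Hs. assert (Hp : 0 < eps - Rabs s) by lra.
exists (mkposreal _ Hp). intros y Hy k _. change R in y. apply f_smooth.
change (Rabs (y - s) < eps - Rabs s) in Hy.
pose proof (Rabs_triang (y - s) s). replace (y - s + s) with y in * by ring. lra.
Qed.

Lemma continuous_Derive_n (j : nat) (s : R) : Rabs s < eps ->
  continuous (Derive_n f j) s.
Proof. intros Hs. exact (ex_derive_continuous _ s (f_smooth (S j) s Hs)). Qed.

Lemma Taylor_flat (j : nat) (t : R) : Rabs t < eps ->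
  (forall i, (i < j)%nat -> Derive_n f i 0 = 0) ->
  exists z, Rabs z <= Rabs t /\ f t = t ^ j / INR (Factorial.fact j) * Derive_n f j z.
Proof.
intros Ht Hv. destruct (Rtotal_order t 0) as [Hneg|[->|Hpos]].
- rewrite Rabs_left in Ht by lra.
  assert (Hloc : forall s, Rabs s < eps -> forall N,
    locally (- s) (fun y => forall k, (k <= N)%nat -> ex_derive_n f k y)).
  { intros s Hs N. apply smooth_on_locally. now rewrite Rabs_Ropp. }
  destruct (Taylor_Lagrange_flat (fun y => f (- y)) j (- t)) as [z [Hz E]]; [lra| | |].
  + intros s Hs k _. apply ex_derive_n_comp_opp, Hloc. rewrite Rabs_right; lra.
  + intros i Hi. rewrite Derive_n_comp_opp, Ropp_0, Hv by (auto; apply Hloc;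
      rewrite Rabs_R0; lra). ring.
  + exists (- z). rewrite Rabs_Ropp, Rabs_right, Rabs_left by lra. split; [lra|].
    rewrite Ropp_involutive in E. rewrite E, Derive_n_comp_opp
      by (apply Hloc; rewrite Rabs_right; lra).
    assert (Hsign : (-1) ^ j * (-1) ^ j = 1).
    { rewrite <- Rpow_mult_distr, <- (pow1 j). f_equal. ring. }
    replace ((- t) ^ j) with ((-1) ^ j * t ^ j)
      by (rewrite <- Rpow_mult_distr; f_equal; ring).
    rewrite <- (Rmult_1_l (t ^ j / _ * _)), <- Hsign. unfold Rdiv; ring.
- exists 0. split; [lra|]. destruct j as [|j]; [simpl; field|].
  change (f 0) with (Derive_n f 0 0). rewrite (Hv 0%nat) by lia. simpl. unfold Rdiv. ring.
- rewrite Rabs_right in Ht by lra.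
  destruct (Taylor_Lagrange_flat f j t Hpos) as [z [Hz E]]; auto.
  + intros s Hs k _. apply f_smooth. rewrite Rabs_right; lra.
  + exists z. rewrite !Rabs_right by lra. split; [lra|exact E].
Qed.

(* Continuous at 0 as soon as the derivatives of order < j vanish there (Taylor). *)
Definition flat_quotient (j : nat) (t : R) : R :=
  if Req_EM_T t 0 then Derive_n f j 0 / INR (Factorial.fact j) else f t / t ^ j.

Section FlatQuotient.

Variable j : nat.
Hypothesis f_flat : forall i, (i < j)%nat -> Derive_n f i 0 = 0.

Lemma flat_quotientE (t : R) : f t = t ^ j * flat_quotient j t.
Proof.
unfold flat_quotient. destruct (Req_EM_T t 0) as [->|Ht].
- destruct j as [|j']; [simpl; field|].
  change (f 0) with (Derive_n f 0 0). rewrite (f_flat 0%nat) by lia. simpl; ring.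
- field. now apply pow_nonzero.
Qed.

Lemma continuous_flat_quotient (t : R) : Rabs t < eps ->
  continuous (flat_quotient j) t.
Proof.
intros Ht. destruct (Req_EM_T t 0) as [->|Ht0].
- apply continuous_epsilon_delta. intros e He.
  assert (HF : 0 < INR (Factorial.fact j)) by apply INR_fact_lt_0.
  destruct (proj1 (continuous_epsilon_delta _ _) (continuous_Derive_n j 0 Ht)
    (e * INR (Factorial.fact j))) as [d [Hd Hc]]; [nra|].
  exists (Rmin d eps). split; [now apply Rmin_pos|].
  intros y Hy. rewrite Rminus_0_r in Hy.
  pose proof (Rmin_l d eps). pose proof (Rmin_r d eps).
  unfold flat_quotient. destruct (Req_EM_T 0 0) as [_|]; [|congruence].
  destruct (Req_EM_T y 0) as [->|Hy0]; [rewrite Rminus_diag, Rabs_R0; lra|].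
  destruct (Taylor_flat j y) as [z [Hz ->]]; [lra|exact f_flat|].
  replace (y ^ j / INR (Factorial.fact j) * Derive_n f j z / y ^ j
           - Derive_n f j 0 / INR (Factorial.fact j))
    with ((Derive_n f j z - Derive_n f j 0) / INR (Factorial.fact j))
    by (field; split; [lra|now apply pow_nonzero]).
  unfold Rdiv. rewrite Rabs_mult, Rabs_inv, (Rabs_right (INR _)) by lra.
  apply (Rmult_lt_reg_r (INR (Factorial.fact j))); [exact HF|].
  rewrite Rmult_assoc, Rinv_l by lra. rewrite Rmult_1_r.
  apply Hc. rewrite Rminus_0_r. lra.
- apply (continuous_ext_loc _ (fun y => f y * / y ^ j)).
  + assert (Hp : 0 < Rabs t) by (apply Rabs_pos_lt; exact Ht0).
    exists (mkposreal _ Hp). intros y Hy. change R in y.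
    change (Rabs (y - t) < Rabs t) in Hy.
    unfold flat_quotient. destruct (Req_EM_T y 0) as [->|]; [|reflexivity].
    rewrite Rminus_0_l, Rabs_Ropp in Hy. lra.
  + apply (continuous_mult f (fun y => / y ^ j)).
    * exact (ex_derive_continuous _ _ (f_smooth 1%nat t Ht)).
    * apply continuous_Rinv_comp; [|now apply pow_nonzero].
      apply (ex_derive_continuous (fun y => y ^ j)). auto_derive. exact I.
Qed.

End FlatQuotient.

Lemma Derive_n_eq0_of_bigO (m : nat) (delta C : R) : 0 < delta ->
  (forall t, Rabs t < delta -> Rabs (f t) <= C * Rabs t ^ m) ->
  forall j, (j < m)%nat -> Derive_n f j 0 = 0.
Proof.
intros Hd HB j. induction j as [j IH] using (well_founded_induction Wf_nat.lt_wf).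
intros Hjm. assert (Hflat : forall i, (i < j)%nat -> Derive_n f i 0 = 0)
  by (intros i Hi; apply IH; lia).
assert (HF : 0 < INR (Factorial.fact j)) by apply INR_fact_lt_0.
assert (Hq : flat_quotient j 0 = 0).
{ apply (continuous_eq0_of_linear_bound _ (Rmin 1 (Rmin delta eps)) (Rabs C)).
  - repeat apply Rmin_pos; lra.
  - apply continuous_flat_quotient; [exact Hflat|rewrite Rabs_R0; lra].
  - intros t [Ht0 Ht]. pose proof (Rmin_l 1 (Rmin delta eps)).
    pose proof (Rmin_r 1 (Rmin delta eps)). pose proof (Rmin_l delta eps).
    assert (Htj : 0 < t ^ j) by (apply pow_lt; lra).
    assert (Hb := HB t). rewrite Rabs_right in Hb by lra.
    rewrite (flat_quotientE j Hflat t), Rabs_mult, Rabs_right in Hb by lra.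
    replace m with (j + S (m - S j))%nat in Hb by lia.
    rewrite pow_add in Hb. simpl in Hb.
    assert (t ^ (m - S j) <= 1) by (rewrite <- (pow1 (m - S j)); apply pow_incr; lra).
    assert (Hbt : Rabs (flat_quotient j t) <= C * (t * t ^ (m - S j))).
    { apply (Rmult_le_reg_l (t ^ j)); [exact Htj|].
      eapply Rle_trans; [apply Hb; lra|right; ring]. }
    pose proof (pow_le t (m - S j) ltac:(lra)).
    apply (Rle_trans _ _ _ Hbt), Rle_trans with (Rabs C * (t * t ^ (m - S j))).
    + apply Rmult_le_compat_r; [nra|apply Rle_abs].
    + apply Rmult_le_compat_l; [apply Rabs_pos|nra]. }
unfold flat_quotient in Hq. destruct (Req_EM_T 0 0) as [_|]; [|congruence].
apply (Rmult_eq_reg_r (/ INR (Factorial.fact j))); [|apply Rinv_neq_0_compat; lra].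
rewrite Rmult_0_l. exact Hq.
Qed.

Lemma mult_ge_of_bigO (m : nat) (delta C : R) : 0 < delta ->
  (forall t, Rabs t < delta -> Rabs (f t) <= C * Rabs t ^ m) -> mult_ge f m.
Proof.
intros Hd HB. pose proof (Derive_n_eq0_of_bigO m delta C Hd HB) as Hflat.
exists eps. split; [exact eps_pos|]. exists (flat_quotient m). split.
- intros t Ht. now apply continuous_flat_quotient.
- intros t _. now apply flat_quotientE.
Qed.

End FlatFunction.

Lemma bigO_of_mult_ge (f : R -> R) (m : nat) : mult_ge f m ->
  exists delta C, 0 < delta /\ 0 <= C /\
    forall t, Rabs t < delta -> Rabs (f t) <= C * Rabs t ^ m.
Proof.
intros [d [Hd [g [Hc Hf]]]].
destruct (continuous_at_bounded g 0) as [d' [M [Hd' [HM Hg]]]];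
  [apply Hc; rewrite Rabs_R0; exact Hd|].
exists (Rmin d d'), M. split; [now apply Rmin_pos|]. split; [exact HM|].
intros t Ht. pose proof (Rmin_l d d'). pose proof (Rmin_r d d').
rewrite Hf, Rabs_mult, <- RPow_abs by lra. rewrite Rmult_comm.
apply Rmult_le_compat_r; [apply pow_le, Rabs_pos|]. apply Hg. rewrite Rminus_0_r. lra.
Qed.

Lemma mult_ge_common_radius (N : nat) (f : nat -> R -> R) (p : nat -> nat) :
  (forall k, (k <= N)%nat -> mult_ge (f k) (p k)) ->
  exists delta, 0 < delta /\ exists g : nat -> R -> R,
    forall k, (k <= N)%nat -> forall t, Rabs t < delta ->
      continuous (g k) t /\ f k t = t ^ p k * g k t.
Proof.
induction N as [|N IH]; intros Hf.
- destruct (Hf 0%nat (le_n 0)) as [d [Hd [g [Hc He]]]].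
  exists d. split; [exact Hd|]. exists (fun _ => g). intros k Hk t Ht.
  replace k with 0%nat by lia. split; auto.
- destruct IH as [d [Hd [g Hg]]]; [intros k Hk; apply Hf; lia|].
  destruct (Hf (S N) (le_n _)) as [d' [Hd' [g' [Hc' He']]]].
  exists (Rmin d d'). split; [now apply Rmin_pos|].
  exists (fun k => if Nat.eq_dec k (S N) then g' else g k).
  intros k Hk t Ht. pose proof (Rmin_l d d'). pose proof (Rmin_r d d').
  destruct (Nat.eq_dec k (S N)) as [->|Hne]; [split; [apply Hc'|apply He']; lra|].
  apply Hg; lia || lra.
Qed.

Lemma Rabs_le_sqrt_of_sqr_le (x K u : R) : 0 <= K ->
  x * x <= K * (u * u) -> Rabs x <= sqrt K * Rabs u.
Proof.
intros HK H. rewrite <- sqrt_Rsqr_abs, <- (sqrt_Rsqr (Rabs u)) by apply Rabs_pos.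
rewrite <- sqrt_mult_alt by exact HK. apply sqrt_le_1_alt.
unfold Rsqr. rewrite <- Rabs_mult, Rabs_right by (apply Rle_ge; nra). lra.
Qed.

Local Close Scope R_scope.

From HB Require Import structures.
From mathcomp Require Import all_boot all_order all_fingroup all_algebra.
From mathcomp Require Import Rstruct mpoly.
From mathcomp Require Import ring lra zify.

Set Implicit Arguments.
Unset Strict Implicit.
Unset Printing Implicit Defensive.
Import Order.TTheory GRing.Theory Num.Theory.
Local Open Scope ring_scope.

Lemma mesym_eval_scale (T : comNzRingType) n (x : 'I_n -> T) c k :
  (mesym n T k).@[fun i => c * x i] = c ^+ k * (mesym n T k).@[x].
Proof.
rewrite /mesym !raddf_sum /= mulr_sumr; apply: eq_bigr => h /eqP hk.
rewrite !rmorph_prod /=; under eq_bigr do rewrite mevalXU.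
rewrite big_split /= prodr_const hk.
by congr (_ * _); apply: eq_bigr => i _; rewrite mevalXU.
Qed.

Lemma mesym_eval_norm_le (T : numDomainType) n (x : 'I_n -> T) k B :
  0 <= B -> (forall i, `|x i| <= B) ->
  `|(mesym n T k).@[x]| <= 'C(n, k)%:R * B ^+ k.
Proof.
move=> B0 HB; rewrite /mesym raddf_sum /=.
apply: le_trans (ler_norm_sum _ _ _) _.
have -> : 'C(n, k)%:R * B ^+ k = \sum_(h : {set 'I_n} | #|h| == k) B ^+ k.
  by rewrite sumr_const -cardsE card_draws card_ord mulr_natl.
apply: ler_sum => h /eqP hk; rewrite rmorph_prod /= normr_prod -hk -prodr_const.
by apply: ler_prod => i _; rewrite mevalXU normr_ge0 HB.
Qed.

(* Multiplying by ['X] shifts the coefficients, which keeps the indices free of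
   truncated subtraction along the induction. *)
Lemma prod_XsubC_top_coefs (T : comNzRingType) (s : seq T) :
  let P := \prod_(c <- s) ('X - c%:P) in
  [/\ P`_(size s) = 1, (P * 'X)`_(size s) = - \sum_(c <- s) c
    & 2 * (P * 'X * 'X)`_(size s) = (\sum_(c <- s) c) ^+ 2 - \sum_(c <- s) c ^+ 2].
Proof.
have coefXsubCM (c : T) Q i : (('X - c%:P) * Q)`_i.+1 = Q`_i - c * Q`_i.+1.
  by rewrite mulrBl coefB coefXM coefCM.
elim: s => [|c s IH] /=.
  by rewrite !big_nil coef1 !coefMX /= oppr0 expr0n mulr0 addr0.
move: IH; set P := \prod_(c <- s) ('X - c%:P) => -[P1 PX PXX].
have P0 : P`_(size s).+1 = 0 by rewrite nth_default // size_prod_XsubC.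
have PX1 : (P * 'X)`_(size s).+1 = 1 by rewrite coefMX.
have PXX1 : (P * 'X * 'X)`_(size s).+1 = (P * 'X)`_(size s) by rewrite coefMX.
rewrite !big_cons -!mulrA !coefXsubCM !mulrA -/P PX1 PXX1 P1 P0 PX.
split; [by rewrite mulr0 subr0 | by ring | by rewrite mulrBr PXX; ring].
Qed.

Section CurvePoly.

Variables (n : nat) (a : nat -> R -> R) (t : R).

Lemma coef_curve_poly i : (curve_poly n a t)`_i =
  (i == n)%:R + \sum_(j < n) (-1) ^+ j.+1 * a j.+1 t * (i == (n - j.+1)%N)%:R.
Proof.
rewrite /curve_poly coefD coefXn coef_sum; congr (_ + _).
by apply: eq_bigr => j _; rewrite coefZ coefXn.
Qed.

Lemma coef_curve_poly_sub k : (1 <= k <= n)%N ->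
  (curve_poly n a t)`_(n - k) = (-1) ^+ k * a k t.
Proof.
move=> /andP [k1 kn]; rewrite coef_curve_poly.
have kn' : (k.-1 < n)%N by lia.
rewrite (bigD1 (Ordinal kn')) //= big1 => [|j /eqP jk].
  have -> : ((n - k)%N == n) = false by apply/negbTE/eqP; lia.
  by rewrite prednK // eqxx mulr1 add0r addr0.
have -> : ((n - k)%N == (n - j.+1)%N) = false.
  by apply/negbTE/eqP => E; apply: jk; apply: val_inj => /=; have := ltn_ord j; lia.
by rewrite mulr0.
Qed.

Lemma coef_curve_poly_ge i : (n <= i)%N -> (curve_poly n a t)`_i = (i == n)%:R.
Proof.
move=> ni; rewrite coef_curve_poly big1 ?addr0 // => j _.
have -> : (i == (n - j.+1)%N) = false by apply/negbTE/eqP; have := ltn_ord j; lia.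
by rewrite mulr0.
Qed.

Lemma size_curve_poly : size (curve_poly n a t) = n.+1.
Proof.
apply/anti_leq/andP; split.
  apply/leq_sizeP => i ni; rewrite coef_curve_poly_ge; last by lia.
  by have -> : (i == n) = false by apply/negbTE/eqP; lia.
rewrite ltnNge; apply/negP => /leq_sizeP /(_ n (leqnn n)).
by rewrite coef_curve_poly_ge // eqxx => /eqP; rewrite oner_eq0.
Qed.

End CurvePoly.

Lemma hyperbolic_curve_roots n a t : (2 <= n)%N -> hyperbolic (curve_poly n a t) ->
  exists x : 'I_n -> R,
    (forall k, (1 <= k <= n)%N -> a k t = (mesym n R k).@[x]) /\
    \sum_i x i ^+ 2 = a 1%N t ^+ 2 - 2 * a 2%N t.
Proof.
move=> n2 [s Ps]; have [_ PX PXX] := prod_XsubC_top_coefs s.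
have sz_s : size s == n.
  by rewrite -eqSS -(size_prod_XsubC s id) -Ps size_curve_poly.
have e_a k : (1 <= k <= n)%N -> a k t = (mesym n R k).@[tnth (Tuple sz_s)].
  move=> k1n; have kn : (k < n.+1)%N by lia.
  have := mroots_coeff (Tuple sz_s) (Ordinal kn).
  rewrite /= -Ps coef_curve_poly_sub // => /mulfI; apply.
  by rewrite signr_eq0.
exists (tnth (Tuple sz_s)); split => //.
rewrite -(big_tuple _ _ (Tuple sz_s) xpredT (fun c => c ^+ 2)) /=.
rewrite -Ps (eqP sz_s) in PX PXX; case: n n2 sz_s Ps e_a PX PXX => [|[|m]] // _ _ _ _.
have := @coef_curve_poly_sub m.+2 a t 1 isT; have := @coef_curve_poly_sub m.+2 a t 2 isT.
rewrite !coefMX subn1 subn2 /= => -> ->.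
rewrite expr1 mulN1r sqrrN expr1n mul1r => /oppr_inj S1.
by rewrite -S1; lra.
Qed.

Lemma mXE (n : nat) (l : 'I_n) : mX l = U_(l)%MM.
Proof. by apply/mnmP => i; rewrite /mX !mnmE eq_sym. Qed.

Lemma msym_mpolyXU (T : nzRingType) n (s : 'S_n) (i : 'I_n) :
  msym s ('X_i : {mpoly T[n]}) = 'X_(s i).
Proof. by rewrite /msym mmapX mmap1U. Qed.

Lemma Delta_detE (n k : nat) : Delta n k =
  \det (\matrix_(i < k, j < k) \sum_(l < n) ('X_l : {mpoly R[n]}) ^+ (i + j)).
Proof.
congr (\det _); apply/matrixP => i j; rewrite !mxE.
by apply: eq_bigr => l _; rewrite mXE.
Qed.

Lemma Delta_symmetric (n k : nat) : Delta n k \is symmetric.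
Proof.
apply/issymP => s; rewrite Delta_detE -det_map_mx; congr (\det _).
apply/matrixP => i j; rewrite !mxE rmorph_sum /=.
under eq_bigr do rewrite rmorphXn /= msym_mpolyXU.
by rewrite [RHS](reindex_inj (@perm_inj _ s)).
Qed.

Lemma Dtilde_sigmas (n k : nat) : comp_mpoly (sigmas n) (Dtilde n k) = Delta n k.
Proof.
have [q [qE _]] := sym_fundamental (Delta_symmetric n k).
exact: (epsilon_spec (inhabits 0)
  (fun q : {mpoly R[n]} => comp_mpoly (sigmas n) q = Delta n k) (ex_intro _ q qE)).
Qed.

Lemma meval_Dtilde_mesym (n k : nat) (x : 'I_n -> R) :
  (Dtilde n k).@[fun i : 'I_n => (mesym n R (val i).+1).@[x]] = (Delta n k).@[x].
Proof.
rewrite -Dtilde_sigmas comp_mpoly_meval; apply: meval_eq => i.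
by rewrite /sigmas tnth_mktuple.
Qed.

Lemma meval_Delta (n k : nat) (x : 'I_n -> R) : (Delta n k).@[x] =
  \det (\matrix_(i < k, j < k) \sum_(l < n) x l ^+ (i + j)).
Proof.
rewrite Delta_detE -det_map_mx; congr (\det _); apply/matrixP => i j.
rewrite !mxE rmorph_sum /=; apply: eq_bigr => l _.
by rewrite rmorphXn /= mevalXU.
Qed.

Lemma meval_Delta_scale (n k : nat) (x : 'I_n -> R) c :
  (Delta n k).@[fun i => c * x i] = c ^+ (k * (k - 1)) * (Delta n k).@[x].
Proof.
rewrite !meval_Delta; set M := \matrix_(i < k, j < k) \sum_(l < n) x l ^+ (i + j).
set d := \row_(i < k) c ^+ i.
have -> : \matrix_(i < k, j < k) \sum_(l < n) (c * x l) ^+ (i + j) =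
    diag_mx d *m M *m diag_mx d.
  apply/matrixP => i j; rewrite mul_mx_diag mul_diag_mx !mxE mulr_sumr mulr_suml.
  by apply: eq_bigr => l _; rewrite exprMn exprD; ring.
have sum_ordE m : (2 * \sum_(i < m) i = m * (m - 1))%N.
  by elim: m => [|m IH]; rewrite ?big_ord0 // big_ord_recr /= mulnDr IH; nia.
rewrite !det_mulmx det_diag -sum_ordE mul2n -addnn exprD.
have -> : \prod_i d 0 i = c ^+ (\sum_(i < k) i).
  by rewrite -prodrXr; apply: eq_bigr => i _; rewrite mxE.
ring.
Qed.

Lemma meval_Delta2 (n : nat) (x : 'I_n -> R) : (Delta n 2).@[x] =
  n%:R * \sum_(l < n) x l ^+ 2 - (\sum_(l < n) x l) ^+ 2.
Proof.
rewrite meval_Delta (expand_det_row _ 0) !big_ord_recl big_ord0.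
rewrite /cofactor !det_mx11 !mxE /= /bump /=.
under eq_bigr do rewrite expr0.
under [X in _ + (X * _ + _)]eq_bigr do rewrite expr1.
by rewrite sumr_const card_ord -mulr_natl; ring.
Qed.

Lemma continuous_big (op : R -> R -> R) (idx : R) (I : Type) (s : seq I)
    (F : I -> R -> R) (t : R) :
  (forall f g : R -> R, continuous f t -> continuous g t ->
     continuous (fun y => op (f y) (g y)) t) ->
  (forall i, continuous (F i) t) ->
  continuous (fun y => \big[op/idx]_(i <- s) F i y) t.
Proof.
move=> opC FC; elim: s => [|i s IH].
  apply: (continuous_ext (fun _ => idx)) => [y|]; first by rewrite big_nil.
  exact: continuous_const.
apply: (continuous_ext (fun y => op (F i y) (\big[op/idx]_(j <- s) F j y))).
  by move=> y; rewrite big_cons.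
exact: opC.
Qed.

Lemma continuous_meval (n : nat) (p : {mpoly R[n]}) (v : 'I_n -> R -> R) (t : R) :
  (forall i, continuous (v i) t) -> continuous (fun y => p.@[fun i => v i y]) t.
Proof.
move=> vC; have plusC (f g : R -> R) : continuous f t -> continuous g t ->
    continuous (fun y => f y + g y) t by exact: continuous_plus.
have multC (f g : R -> R) : continuous f t -> continuous g t ->
    continuous (fun y => f y * g y) t by exact: continuous_mult.
apply: (continuous_ext (fun y => \sum_(m <- msupp p) p@_m * \prod_i v i y ^+ m i)).
  by move=> y; rewrite mevalE.
apply: continuous_big => [f g /plusC|m]; first exact.
apply: (multC); first exact: continuous_const.
apply: continuous_big => [f g /multC|i]; first exact.
apply: (continuous_ext (fun y => pow (v i y) (m i))) => [y|]; first by rewrite RpowE.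
apply: (continuous_comp (v i) (fun z => pow z (m i))) => //.
by apply: ex_derive_continuous; auto_derive.
Qed.

Section HyperbolicCurve.

Variables (n : nat) (a : nat -> R -> R) (eps : R).
Hypothesis n_ge2 : (2 <= n)%N.
Hypothesis eps_gt0 : Rlt 0 eps.
Hypothesis a_smooth : forall k, (1 <= k <= n)%N -> smooth_on eps (a k).
Hypothesis a1_eq0 : forall t, Rlt (Rabs t) eps -> a 1%N t = R0.
Hypothesis curve_hyperbolic :
  forall t, Rlt (Rabs t) eps -> hyperbolic (curve_poly n a t).

Lemma curve_roots t : Rlt (Rabs t) eps -> exists x : 'I_n -> R,
  [/\ forall k, (1 <= k <= n)%N -> a k t = (mesym n R k).@[x],
      \sum_i x i ^+ 2 = - (2 * a 2%N t)
    & forall k, Dtilde_curve n k a t = (Delta n k).@[x]].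
Proof.
move=> Ht; have [x [xE x2E]] := hyperbolic_curve_roots n_ge2 (curve_hyperbolic Ht).
exists x; split => // [|k]; first by rewrite x2E a1_eq0 // expr0n sub0r.
rewrite /Dtilde_curve -meval_Dtilde_mesym; apply: meval_eq => i.
by rewrite /coefs xE // ltn_ord.
Qed.

(* tilde Delta_k is only known through tilde Delta_k (sigma(x)) = Delta_k(x), so its
   weighted homogeneity is obtained through the roots of P(t). *)
Lemma Dtilde_curve_scale t c k : Rlt (Rabs t) eps ->
  (Dtilde n k).@[fun i => c ^+ (val i).+1 * coefs n a t i] =
  c ^+ (k * (k - 1)) * Dtilde_curve n k a t.
Proof.
move=> Ht; have [x [xE _ DE]] := curve_roots Ht.
rewrite DE -meval_Delta_scale -meval_Dtilde_mesym; apply: meval_eq => i.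
by rewrite mesym_eval_scale /coefs xE // ltn_ord.
Qed.

Lemma Dtilde_curve_factor t c (y : 'I_n -> R) k : Rlt (Rabs t) eps -> (2 <= k)%N ->
  (forall i, coefs n a t i = c ^+ (val i).+1 * y i) ->
  Dtilde_curve n k a t = c ^+ (k * (k - 1)) * (Dtilde n k).@[y].
Proof.
move=> Ht k2; have [->|c0] := eqVneq c 0 => yE.
  have kk0 : (k * (k - 1) == 0)%N = false by apply/negbTE/eqP; nia.
  transitivity ((Dtilde n k).@[fun i => 0 ^+ (val i).+1 * coefs n a t i]).
    by rewrite /Dtilde_curve; apply: meval_eq => i; rewrite yE !expr0n !mul0r.
  by rewrite Dtilde_curve_scale // expr0n kk0 !mul0r.
rewrite -[LHS]mul1r -(expr1n _ (k * (k - 1))) -(mulfV c0) exprMn -mulrA.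
rewrite -Dtilde_curve_scale //; congr (_ * _); apply: meval_eq => i /=.
by rewrite yE mulrA -exprMn mulVf // expr1n mul1r.
Qed.

Lemma mult_ge_Dtilde_of_mult_ge_coefs r :
  (forall k, (2 <= k <= n)%N -> mult_ge (a k) (k * r)) ->
  forall k, (2 <= k)%N -> mult_ge (Dtilde_curve n k a) (k * (k - 1) * r).
Proof.
move=> aM k k2.
have [d [d_gt0 [g gE]]] := mult_ge_common_radius (n - 2)
  (fun j => a j.+2) (fun j => (j.+2 * r)%N) (fun j jn => aM j.+2 ltac:(lia)).
pose y t (i : 'I_n) := if val i is j.+1 then g j t else 0.
exists (Rmin d eps); split; first exact: Rmin_pos.
exists (fun t => (Dtilde n k).@[y t]); split => t /Rmin_Rgt [td te].
  apply: (continuous_meval (v := fun i t => y t i)) => -[[|j] jn] /=.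
    exact: continuous_const.
  by have [] := gE j ltac:(lia) t td.
rewrite (Dtilde_curve_factor (c := t ^+ r) (y := y t)) // => [|[[|j] jn]].
- by rewrite RmultE RpowE -exprM mulnC.
- by rewrite /coefs /= a1_eq0 // mulr0.
- have [_ aE] := gE j ltac:(lia) t td.
  by rewrite /coefs /= aE RmultE RpowE -exprM mulnC.
Qed.

Lemma mult_ge_a2_of_mult_ge_Dtilde2 r :
  mult_ge (Dtilde_curve n 2 a) (2 * r) -> mult_ge (a 2%N) (2 * r).
Proof.
move=> [d [d_gt0 [g [gC gE]]]].
exists (Rmin d eps); split; first exact: Rmin_pos.
exists (fun t => - (2 * n%:R)^-1 * g t); split => t /Rmin_Rgt [td te].
  by apply: (continuous_mult (fun _ => _) g); [exact: continuous_const | exact: gC].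
have [x [xE x2E DE]] := curve_roots te.
have sum_x : \sum_i x i = 0.
  rewrite -[RHS](a1_eq0 te) xE; last by lia.
  rewrite mesym1E raddf_sum.
  by apply: eq_bigr => i _; rewrite /= mevalXU.
move: (gE t td); rewrite DE meval_Delta2 x2E sum_x RmultE RpowE => a2E.
have n0 : n%:R != 0 :> R by rewrite pnatr_eq0 -lt0n; lia.
by rewrite RmultE mulrCA -a2E; field.
Qed.

Lemma mult_ge_coefs_of_mult_ge_a2 r : mult_ge (a 2%N) (2 * r) ->
  forall k, (1 <= k <= n)%N -> mult_ge (a k) (k * r).
Proof.
move=> /bigO_of_mult_ge [d [C [d_gt0 [/RleP C_ge0 a2B]]]] k kn.
pose K := 2%:R * C; have K_ge0 : 0 <= K by rewrite mulr_ge0 ?ler0n.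
pose B := sqrt K.
apply: (mult_ge_of_bigO (a k) eps eps_gt0 (a_smooth kn) (k * r)%N (Rmin d eps)
  ('C(n, k)%:R * B ^+ k)); first exact: Rmin_pos.
move=> t /Rmin_Rgt [td te]; have [x [xE x2E _]] := curve_roots te.
have xB i : `|x i| <= B * `|t ^+ r|.
  apply/RleP; rewrite -!RabsE -RmultE; apply: Rabs_le_sqrt_of_sqr_le.
    exact/RleP.
  have x2_le : x i * x i <= \sum_j x j ^+ 2.
    by rewrite (bigD1 i) //= -expr2 lerDl sumr_ge0 // => j _; rewrite sqr_ge0.
  have /RleP := a2B t td; rewrite !RabsE RmultE RpowE mulnC exprM -normrX.
  rewrite real_normK ?num_real // => a2_le; apply/RleP; rewrite !RmultE -!expr2.
  have := ler_norm (- a 2%N t); rewrite normrN => a2_norm.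
  by rewrite -expr2 x2E in x2_le; rewrite /K; nra.
have B_ge0 : 0 <= B * `|t ^+ r| by rewrite mulr_ge0 //; apply/RleP/sqrt_pos.
rewrite xE // RpowE !RabsE; apply/RleP.
apply: le_trans (mesym_eval_norm_le k B_ge0 xB) _.
by rewrite exprMn mulrA normrX -exprM mulnC.
Qed.

End HyperbolicCurve.

Local Close Scope ring_scope.

Theorem lemma3p7 (n : nat) (a : nat -> R -> R) (eps : R) :
  (2 <= n)%N ->
  Rlt 0 eps ->
  (forall k : nat, (1 <= k <= n)%N -> smooth_on eps (a k)) ->
  (forall t : R, Rlt (Rabs t) eps -> a 1%N t = R0) ->
  (forall t : R, Rlt (Rabs t) eps -> hyperbolic (curve_poly n a t)) ->
  forall r : nat,
    ((forall k : nat, (2 <= k <= n)%N -> mult_ge (a k) (k * r)) <->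
     (forall k : nat, (2 <= k <= n)%N ->
        mult_ge (Dtilde_curve n k a) (k * (k - 1) * r))) /\
    ((forall k : nat, (2 <= k <= n)%N ->
        mult_ge (Dtilde_curve n k a) (k * (k - 1) * r)) <->
     mult_ge (a 2%N) (2 * r)).
Proof.
move=> n2 eps_gt0 a_smooth a1_eq0 P_hyperbolic r.
have coefs_to_Dtilde : (forall k, (2 <= k <= n)%N -> mult_ge (a k) (k * r)) ->
    forall k, (2 <= k)%N -> mult_ge (Dtilde_curve n k a) (k * (k - 1) * r).
  exact: (mult_ge_Dtilde_of_mult_ge_coefs n2 eps_gt0 a1_eq0 P_hyperbolic).
have Dtilde_to_a2 : (forall k, (2 <= k <= n)%N ->
    mult_ge (Dtilde_curve n k a) (k * (k - 1) * r)) -> mult_ge (a 2%N) (2 * r).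
  move=> DM; apply: (mult_ge_a2_of_mult_ge_Dtilde2 n2 eps_gt0 a1_eq0 P_hyperbolic).
  by apply: DM; rewrite leqnn.
have a2_to_coefs : mult_ge (a 2%N) (2 * r) ->
    forall k, (2 <= k <= n)%N -> mult_ge (a k) (k * r).
  move=> a2M k /andP [k2 kn].
  by apply: (mult_ge_coefs_of_mult_ge_a2 n2 eps_gt0 a_smooth a1_eq0 P_hyperbolic a2M); lia.
split; split.
- by move=> aM k /andP [k2 _]; exact: (coefs_to_Dtilde aM k k2).
- by move=> /Dtilde_to_a2 /a2_to_coefs.
- exact: Dtilde_to_a2.
- by move=> /a2_to_coefs aM k /andP [k2 _]; exact: (coefs_to_Dtilde aM k k2).
Qed.
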